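(* Let $G$ be the path on $n\ge 3$ vertices. Then $$\mathcal{R}(G)=\begin{cases}\displaystyle\sum_{i=1}^{n/2}\frac{2n^2-3n-4i+4}{n(n-1)^2-2(n-1)(i-1)} & \text{if } n \text{ is even},\\[2ex] \displaystyle\frac{2n^2-3n-1}{2n(n-1)^2}+\sum_{i=1}^{\lfloor n/2\rfloor}\frac{2n^3-3n^2-4n(i-1)+1}{n^2(n-1)^2-2n(n-1)(i-1)} & \text{if } n \text{ is odd}.\end{cases}$$
   Context: All graphs are finite, simple and connected, with at least two vertices; $d(u,v)$ denotes the shortest-path distance. $V_p$ denotes the set of all unordered pairs $(u,v)$ of distinct vertices. A vertex $x$ resolves the pair $(u,v)$ if $d(x,u)\neq d(x,v)$. For $(u,v)\in V_p$, $R(u,v)$ is the set of all vertices resolving $(u,v)$ (it always contains $u$ and $v$). The resolving share of a vertex $w$ for $(u,v)$ is $r_w(u,v)=\frac{1}{|R(u,v)|}$ if $w$ resolves $u$ and $v$, and $r_w(u,v)=0$ otherwise. For a vertex $w$, $R(w)$ is the set of pairs in $V_p$ resolved by $w$. The average resolving share of $w$ is $ar_w(G)=\frac{1}{|R(w)|}\sum_{(u,v)\in R(w)} r_w(u,v)$, and the resolving topological index of $G$ is $\mathcal{R}(G)=\sum_{w\in V(G)} ar_w(G)$. *)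

From mathcomp Require Import all_boot all_order all_algebra.
Set Implicit Arguments. Unset Strict Implicit. Unset Printing Implicit Defensive.
Import GRing.Theory Num.Theory.

(* A graph is given by an adjacency relation e : rel T on a finite vertex type T
   (simple: symmetric, irreflexive; connected). *)

Definition walk_len (T : finType) (e : rel T) (k : nat) (u v : T) : bool :=
  [exists p : k.-tuple T, path e u p && (last u p == v)].

(* Shortest-path distance: least k with a walk of length k from u to v
   (in a connected graph this is < #|T|, so the search range suffices). *)
Definition gdist (T : finType) (e : rel T) (u v : T) : nat :=
  find (fun k => walk_len e k u v) (iota 0 #|T|).

Definition resolves (T : finType) (e : rel T) (x : T) (P : {set T}) : bool :=
  [exists u in P, exists v in P, gdist e x u != gdist e x v].

Definition Vp (T : finType) : {set {set T}} := [set P : {set T} | #|P| == 2].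

Definition Rpair (T : finType) (e : rel T) (P : {set T}) : {set T} :=
  [set x | resolves e x P].

Definition Rvert (T : finType) (e : rel T) (w : T) : {set {set T}} :=
  [set P in Vp T | resolves e w P].

Local Open Scope ring_scope.
Definition rshare (T : finType) (e : rel T) (w : T) (P : {set T}) : rat :=
  if resolves e w P then (#|Rpair e P|%:R)^-1 else 0.

Definition ar (T : finType) (e : rel T) (w : T) : rat :=
  (#|Rvert e w|%:R)^-1 * \sum_(P in Rvert e w) rshare e w P.

Definition resolving_index (T : finType) (e : rel T) : rat :=
  \sum_(w : T) ar e w.

Definition path_rel (n : nat) : rel 'I_n :=
  fun i j => (i.+1 == j :> nat) || (j.+1 == i :> nat).
Arguments path_rel : clear implicits.

From mathcomp Require Import all_boot all_order all_algebra.
From mathcomp Require Import zify ring lra.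
Import GRing.Theory Num.Theory.
Set Implicit Arguments. Unset Strict Implicit. Unset Printing Implicit Defensive.

(* On the path, d(x, u) = |x - u|, so x resolves {u, v} iff 2x <> u + v.
   Hence |R(u, v)| is n or n - 1 according as u + v is odd or even, and w
   resolves every pair except the m = min(w, n - 1 - w) pairs centred at w.
   With C = C(n, 2) pairs, O = floor(n/2) ceil(n/2) of them of odd sum, this
   gives ar_w = (O / n + (C - O - m) / (n - 1)) / (C - m), a function of m
   alone.  Each m < floor(n/2) is the value of exactly two vertices, and for
   odd n the centre contributes m = floor(n/2) once. *)

Lemma walk_lenP (T : finType) (e : rel T) k u v :
  reflect (exists2 p : seq T, size p = k & path e u p && (last u p == v))
          (walk_len e k u v).
Proof.
apply: (iffP existsP) => [[p pw] | [p sz pw]]; first by exists p; rewrite ?size_tuple.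
by exists (Tuple (introT eqP sz)).
Qed.

Lemma gdist_eq (T : finType) (e : rel T) u v d :
  d < #|T| -> walk_len e d u v -> (forall k, k < d -> ~~ walk_len e k u v) ->
  gdist e u v = d.
Proof.
move=> ltdT walk_d no_shorter; rewrite /gdist -(subnKC (ltnW ltdT)) iotaD find_cat.
have -> : has (fun k => walk_len e k u v) (iota 0 d) = false.
  by apply/hasPn => k; rewrite mem_iota => /andP[_]; exact: no_shorter.
have [m ->] : exists m, #|T| - d = m.+1 by exists (#|T| - d).-1; lia.
by rewrite size_iota /= add0n walk_d addn0.
Qed.

Lemma resolves_set2 (T : finType) (e : rel T) x a b :
  resolves e x [set a; b] = (gdist e x a != gdist e x b).
Proof.
apply/existsP/idP => [[u /andP[+ /existsP[v /andP[]]]] | neq_ab].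
  by rewrite !inE => /orP[]/eqP-> /orP[]/eqP->; rewrite ?eqxx // eq_sym.
by exists a; rewrite set21 /=; apply/existsP; exists b; rewrite set22.
Qed.

Section PathDistance.
Variable n : nat.
Local Notation e := (path_rel n).

Lemma path_rel_last_distn (u : 'I_n) (p : seq 'I_n) :
  path e u p -> `|last u p - u| <= size p.
Proof.
elim: p u => [|x p IHp] u /=; first by rewrite distnn.
by case/andP => /orP[]/eqP ux /IHp; lia.
Qed.

Lemma walk_len_path_rel d (u v : 'I_n) : `|u - v| = d -> walk_len e d u v.
Proof.
elim: d u => [|d IHd] u duv; apply/walk_lenP.
  by exists [::] => //=; apply/eqP/ord_inj; lia.
have [u' uu' du'v] : exists2 u' : 'I_n, e u u' & `|u' - v| = d.
  have [ltuv | leuv] := ltnP u v.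
    have ltu1 : u.+1 < n by have := ltn_ord v; lia.
    by exists (Ordinal ltu1); rewrite /path_rel /= ?eqxx //; lia.
  have ltu1 : u.-1 < n by have := ltn_ord u; lia.
  by exists (Ordinal ltu1); rewrite /path_rel /=; [apply/orP; right; apply/eqP|]; lia.
have /walk_lenP[p sz pw] := IHd u' du'v.
by exists (u' :: p); rewrite /= ?sz // uu'.
Qed.

Lemma gdist_path_rel (u v : 'I_n) : gdist e u v = `|u - v|.
Proof.
apply: gdist_eq; first by rewrite card_ord; have := ltn_ord u; have := ltn_ord v; lia.
  exact: walk_len_path_rel.
move=> k ltk; apply/walk_lenP => -[p sz /andP[pw /eqP lastp]].
by have := path_rel_last_distn pw; rewrite lastp sz; lia.
Qed.

End PathDistance.

Section PairSums.
Variable R : nmodType.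
Local Open Scope ring_scope.

Definition sum_pairs n (f : nat -> R) : R :=
  \sum_(0 <= v < n) \sum_(0 <= u < v) f (u + v)%N.

Lemma eq_sum_pairs n (f g : nat -> R) : f =1 g -> sum_pairs n f = sum_pairs n g.
Proof. by move=> fg; apply: eq_bigr => v _; apply: eq_bigr => u _. Qed.

Lemma sum_pairsD n (f g : nat -> R) :
  sum_pairs n (fun s => f s + g s) = sum_pairs n f + sum_pairs n g.
Proof. by rewrite -big_split; apply: eq_bigr => v _; rewrite -big_split. Qed.

Lemma Vp_ordE n :
  Vp 'I_n = [set [set p.1; p.2] | p in [set p : 'I_n * 'I_n | (p.1 < p.2)%N]].
Proof.
apply/setP => P; rewrite inE; apply/idP/imsetP => [/cards2P[a [b [neq_ab ->]]] |].
  have [ltab | ltba | eqab] := ltngtP a b.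
  - by exists (a, b); rewrite ?inE.
  - by exists (b, a); rewrite ?inE // setUC.
  - by move: neq_ab; rewrite (ord_inj eqab) eqxx.
by case=> -[a b]; rewrite inE /= => ltab ->; rewrite cards2 neq_ltn ltab.
Qed.

Lemma big_Vp_ord n (F : {set 'I_n} -> R) (f : nat -> R) :
  (forall u v : 'I_n, (u < v)%N -> F [set u; v] = f (u + v)%N) ->
  \sum_(P in Vp 'I_n) F P = sum_pairs n f.
Proof.
move=> Ff; rewrite Vp_ordE big_imset /=; last first.
  move=> [a b] [c d]; rewrite !inE /= => ltab ltcd eq_ab_cd.
  have : (a \in [set c; d]) && (b \in [set c; d]) by rewrite -eq_ab_cd set21 set22.
  rewrite !inE => /andP[/orP[]/eqP Ea /orP[]/eqP Eb]; subst => //; exfalso; lia.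
rewrite (eq_bigl (fun p : 'I_n * 'I_n => (p.1 < p.2)%N)) => [|p]; last by rewrite inE.
rewrite -(pair_big_dep predT (fun u v : 'I_n => (u < v)%N) (fun u v => F [set u; v])) /=.
rewrite (exchange_big_dep predT) //= /sum_pairs big_mkord; apply: eq_bigr => v _.
rewrite (big_nat_widen _ _ _ _ _ (ltnW (ltn_ord v))) big_mkord.
by apply: eq_bigr => u ltuv; rewrite Ff.
Qed.

End PairSums.

Lemma sum_pairs1 n : sum_pairs n (fun=> 1) = 'C(n, 2).
Proof.
by rewrite -bin2_sum; apply: eq_bigr => v _; rewrite sum_nat_const_nat muln1 subn0.
Qed.

Lemma sum_pairs_odd n : sum_pairs n (fun s => odd s : nat) = n./2 * uphalf n.
Proof.
have odd_row v k : \sum_(0 <= u < k) odd (u + v) = if odd v then uphalf k else k./2.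
  elim: k => [|k IHk]; first by rewrite big_geq //; case: (odd v).
  by rewrite big_nat_recr //= IHk oddD !uphalf_half; case: (odd v); case: (odd k); lia.
elim: n => [|n IHn]; first by rewrite /sum_pairs big_geq.
rewrite /sum_pairs big_nat_recr //= -/(sum_pairs n (fun s => odd s : nat)) IHn odd_row.
by have := odd_double_half n; case: (odd n); lia.
Qed.

Lemma sum_pairs_double n w :
  w < n -> sum_pairs n (fun s => (s == w.*2) : nat) = minn w (n.-1 - w).
Proof.
have double_row v k : \sum_(0 <= u < k) (u + v == w.*2) = (w.*2 - v < k) && (v <= w.*2).
  by elim: k => [|k IHk]; [rewrite big_geq | rewrite big_nat_recr //= IHk; lia].
suff -> : sum_pairs n (fun s => (s == w.*2) : nat) = minn w.*2.+1 n - w.+1 by lia.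
elim: n => [|n IHn]; first by rewrite /sum_pairs big_geq.
rewrite /sum_pairs big_nat_recr //= -/(sum_pairs n (fun s => (s == w.*2) : nat)).
by rewrite IHn double_row; lia.
Qed.

Section PairSumsRing.
Local Open Scope ring_scope.

Lemma natr_sum_pairs (R : pzSemiRingType) n (f : nat -> nat) :
  (sum_pairs n f)%:R = sum_pairs n (fun s => (f s)%:R) :> R.
Proof. by rewrite natr_sum; apply: eq_bigr => v _; rewrite natr_sum. Qed.

Lemma sum_pairs_mulr (R : pzSemiRingType) n (f : nat -> R) c :
  sum_pairs n (fun s => f s * c) = sum_pairs n f * c.
Proof. by rewrite /sum_pairs mulr_suml; apply: eq_bigr => v _; rewrite mulr_suml. Qed.

End PairSumsRing.

Lemma card_ord_double_eq n s : s./2 < n -> #|[set x : 'I_n | x.*2 == s]| = ~~ odd s.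
Proof.
move=> lt_half; have [odd_s | even_s] := boolP (odd s).
  apply: eq_card0 => x; rewrite inE; apply/negP => /eqP dx.
  by move: odd_s; rewrite -dx odd_double.
rewrite (_ : [set x | _] = [set Ordinal lt_half]) ?cards1 //.
apply/setP => x; rewrite !inE -(inj_eq (@ord_inj n)) /=.
move: (odd_double_half s); rewrite (negbTE even_s) => ds.
by apply/eqP/eqP; lia.
Qed.

Definition ar_path (n m : nat) : rat :=
  (let N := n%:R in let C := 'C(n, 2)%:R in let O := (n./2 * uphalf n)%:R in
   (C - m%:R)^-1 * (O / N + (C - O - m%:R) / (N - 1)))%R.

Section PathResolving.
Variable n : nat.
Local Notation e := (path_rel n).

Lemma resolves_path_rel (x a b : 'I_n) : a != b ->
  resolves e x [set a; b] = (x.*2 != a + b).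
Proof.
rewrite -(inj_eq (@ord_inj n)) resolves_set2 !gdist_path_rel => neq_ab.
by congr negb; apply/eqP/eqP; lia.
Qed.

Lemma card_Rpair_path_rel (a b : 'I_n) : a != b ->
  #|Rpair e [set a; b]| = n - ~~ odd (a + b).
Proof.
move=> neq_ab; rewrite (_ : Rpair _ _ = ~: [set x : 'I_n | x.*2 == a + b]); last first.
  by apply/setP => x; rewrite !inE resolves_path_rel.
rewrite cardsCs setCK card_ord card_ord_double_eq //.
by have := odd_double_half (a + b); have := ltn_ord a; have := ltn_ord b; lia.
Qed.

Local Open Scope ring_scope.

Lemma rshare_path_rel (w u v : 'I_n) : u != v ->
  rshare e w [set u; v] =
  (odd (u + v))%:R / n%:R + (~~ odd (u + v) && (u + v != w.*2)%N)%:R / (n%:R - 1).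
Proof.
move=> neq_uv; rewrite /rshare resolves_path_rel // card_Rpair_path_rel //.
have n_gt0 : (0 < n)%N := leq_ltn_trans (leq0n w) (ltn_ord w).
rewrite eq_sym; have [odd_uv | even_uv] := boolP (odd (u + v)).
  have -> : (u + v != w.*2)%N by apply: contraTneq odd_uv => ->; rewrite odd_double.
  by rewrite subn0 mul1r mul0r addr0.
by case: (_ != _); rewrite ?mul0r ?mul1r ?add0r // natrB.
Qed.

Lemma card_Rvert_path_rel (w : 'I_n) :
  #|Rvert e w| = ('C(n, 2) - minn w (n.-1 - w))%N.
Proof.
have -> : #|Rvert e w| = \sum_(P in Vp 'I_n) (resolves e w P : nat).
  rewrite -sum1_card big_set /= big_mkcondr; apply: eq_bigr => P _.
  by case: resolves.
rewrite (big_Vp_ord (f := fun s => (w.*2 != s) : nat)) => [|u v ltuv]; last first.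
  by rewrite resolves_path_rel // neq_ltn ltuv.
have split : sum_pairs n (fun=> 1) = sum_pairs n (fun s => (w.*2 != s) : nat)
                                    + sum_pairs n (fun s => (s == w.*2) : nat).
  by rewrite -sum_pairsD; apply: eq_sum_pairs => s; rewrite eq_sym; case: (_ == _).
by rewrite -sum_pairs1 -(sum_pairs_double (ltn_ord w)) split addnK.
Qed.

Lemma ar_path_rel (w : 'I_n) : ar e w = ar_path n (minn w (n.-1 - w)).
Proof.
set m := minn w (n.-1 - w).
pose O := sum_pairs n (fun s => odd s : nat).
pose E := sum_pairs n (fun s => (~~ odd s && (s != w.*2)) : nat).
have count_split : 'C(n, 2) = O + E + m.
  rewrite -sum_pairs1 -[m](sum_pairs_double (ltn_ord w)) -!sum_pairsD.
  apply: eq_sum_pairs => s; have [->|] := eqVneq s w.*2; first by rewrite odd_double.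
  by case: odd.
rewrite /ar card_Rvert_path_rel.
have -> : \sum_(P in Rvert e w) rshare e w P = O%:R / n%:R + E%:R / (n%:R - 1).
  rewrite big_set /= big_mkcondr (big_Vp_ord
    (f := fun s => (odd s)%:R / n%:R + (~~ odd s && (s != w.*2))%:R / (n%:R - 1))).
    by rewrite sum_pairsD !sum_pairs_mulr -!natr_sum_pairs.
  move=> u v ltuv; rewrite -rshare_path_rel ?neq_ltn ?ltuv //.
  by rewrite /rshare; case: resolves.
rewrite /ar_path -sum_pairs_odd -/O -/m count_split addnK.
by rewrite !natrD addrK; congr (_ * (_ + _ / _)); ring.
Qed.

Lemma resolving_index_path_rel :
  resolving_index e = \sum_(0 <= w < n) ar_path n (minn w (n.-1 - w)).
Proof. by rewrite /resolving_index big_mkord; apply: eq_bigr => w _; exact: ar_path_rel. Qed.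

End PathResolving.

Lemma sum_fold_min (R : nmodType) (F : nat -> R) n :
  (\sum_(0 <= w < n) F (minn w (n.-1 - w)) =
   \sum_(0 <= i < n./2) F i + \sum_(0 <= i < uphalf n) F i)%R.
Proof.
have n_halves := odd_double_half n; rewrite uphalf_half.
rewrite (@big_cat_nat _ _ _ n./2) //=; last by lia.
congr (_ + _)%R; first by apply: eq_big_nat => i /andP[_ lti]; congr F; lia.
rewrite -{1}[n./2]add0n big_addn big_nat_rev (_ : n - n./2 = odd n + n./2)%N; last by lia.
by apply: eq_big_nat => i /andP[_ lti]; congr F; lia.
Qed.

Section ClosedForm.
Variable R : numFieldType.
Local Open Scope ring_scope.

Lemma natr_bin2 n : 'C(n, 2)%:R = n%:R * (n%:R - 1) / 2 :> R.
Proof.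
elim: n => [|n IHn]; first by rewrite bin0n mul0r mul0r.
by rewrite binS bin1 natrD IHn -natr1; field.
Qed.

Lemma natr_half_uphalf n : (n./2 * uphalf n)%:R = (n%:R ^+ 2 - (odd n)%:R) / 4 :> R.
Proof.
have : (4 * (n./2 * uphalf n) + odd n = n ^ 2)%N.
  by rewrite uphalf_half; have := odd_double_half n; case: odd; nia.
move/(congr1 (fun k => k%:R : R)); rewrite natrD natrM natrX => <-.
by field.
Qed.

End ClosedForm.

Section PathClosedForm.
Variable n : nat.
Hypothesis n_ge3 : (3 <= n)%N.
Local Open Scope ring_scope.

Let n_ge3R : 3 <= n%:R :> rat.
Proof. by rewrite ler_nat. Qed.

Let double_leR m : (m.*2 <= n)%N -> m%:R * 2 <= n%:R :> rat.
Proof. by rewrite -natrM ler_nat muln2. Qed.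

Lemma ar_path_even m : ~~ odd n -> (m.*2 <= n)%N ->
  2 * ar_path n m =
  (2 * n%:R ^+ 2 - 3 * n%:R - 4 * m.+1%:R + 4) /
  (n%:R * (n%:R - 1) ^+ 2 - 2 * (n%:R - 1) * (m.+1%:R - 1)).
Proof.
move=> even_n /double_leR m_le; have := ler0n rat m; have := n_ge3R.
rewrite /ar_path natr_bin2 natr_half_uphalf (negbTE even_n) -[m.+1%:R]natr1 addrK.
rewrite /= subr0.
by move=> *; field; apply/and4P; split; apply: lt0r_neq0; nra.
Qed.

Lemma ar_path_odd m : odd n -> (m.*2 <= n)%N ->
  2 * ar_path n m =
  (2 * n%:R ^+ 3 - 3 * n%:R ^+ 2 - 4 * n%:R * (m.+1%:R - 1) + 1) /
  (n%:R ^+ 2 * (n%:R - 1) ^+ 2 - 2 * n%:R * (n%:R - 1) * (m.+1%:R - 1)).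
Proof.
move=> odd_n /double_leR m_le; have := ler0n rat m; have := n_ge3R.
rewrite /ar_path natr_bin2 natr_half_uphalf odd_n -[m.+1%:R]natr1 addrK /=.
move=> n_ge m_ge0.
have P_gt0 : 0 < n%:R * (n%:R - 1) :> rat by nra.
have P_gt2m : 0 < n%:R * (n%:R - 1) - m%:R * 2 :> rat by nra.
have P_pos := mulr_gt0 P_gt0 P_gt2m.
by field; apply/and4P; split; apply: lt0r_neq0; nra.
Qed.

Lemma ar_path_half : odd n ->
  ar_path n n./2 = (2 * n%:R ^+ 2 - 3 * n%:R - 1) / (2 * n%:R * (n%:R - 1) ^+ 2).
Proof.
move=> odd_n; have := n_ge3R.
rewrite /ar_path natr_bin2 natr_half_uphalf odd_n /=.
have -> : n./2%:R = (n%:R - 1) / 2 :> rat.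
  by rewrite -{2}(odd_double_half n) odd_n -muln2 natrD natrM /=; field.
by move=> *; field; apply/and3P; split; apply: lt0r_neq0; nra.
Qed.

End PathClosedForm.

Local Open Scope ring_scope.

Theorem theorem3p7 (n : nat) (hn : (3 <= n)%N) :
  resolving_index (path_rel n) =
  if ~~ odd n then
    \sum_(1 <= i < (n./2).+1)
      ((2 * n%:R ^+ 2 - 3 * n%:R - 4 * i%:R + 4) /
       (n%:R * (n%:R - 1) ^+ 2 - 2 * (n%:R - 1) * (i%:R - 1)) : rat)
  else
    (2 * n%:R ^+ 2 - 3 * n%:R - 1) / (2 * n%:R * (n%:R - 1) ^+ 2)
    + \sum_(1 <= i < (n./2).+1)
      ((2 * n%:R ^+ 3 - 3 * n%:R ^+ 2 - 4 * n%:R * (i%:R - 1) + 1) /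
       (n%:R ^+ 2 * (n%:R - 1) ^+ 2 - 2 * n%:R * (n%:R - 1) * (i%:R - 1)) : rat).
Proof.
have n_halves := odd_double_half n.
have double_le i : (i < n./2)%N -> (i.*2 <= n)%N by lia.
rewrite resolving_index_path_rel sum_fold_min uphalf_half.
case: ifP => [even_n | /negbFE odd_n].
  rewrite (negbTE even_n) add0n big_add1 -big_split.
  apply: eq_big_nat => i /andP[_ /double_le le_i].
  by rewrite -ar_path_even // mulr_natl mulr2n.
rewrite odd_n add1n big_nat_recr //= ar_path_half // addrA addrC -big_split.
congr (_ + _); rewrite big_add1; apply: eq_big_nat => i /andP[_ /double_le le_i].
by rewrite -ar_path_odd // mulr_natl mulr2n.
Qed.
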